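(* Let $g$ be a function on $[-\pi,\pi]$ of the form $$g(\lambda)=h(\lambda)\,|\lambda-\lambda_1|^{\alpha(1)}\cdots|\lambda-\lambda_r|^{\alpha(r)},$$ where $r\in\mathbb{N}$, $\lambda_1,\dots,\lambda_r\in[-\pi,\pi]$, $\alpha(1),\dots,\alpha(r)\ge0$, and $h$ is a nonnegative measurable function, integrable over $[-\pi,\pi]$, continuous at $\lambda=0$, with a positive lower bound. Then for every $\epsilon>0$ there exists a trigonometric polynomial $t(\lambda)$ such that $0\le t(\lambda)\le g(\lambda)$ for all $\lambda\in[-\pi,\pi]$ and $t(0)\ge g(0)-\epsilon$. *)

From HB Require Import structures.
From mathcomp Require Import all_boot all_order all_algebra.
From mathcomp Require Import all_classical all_reals all_analysis.
Set Implicit Arguments. Unset Strict Implicit. Unset Printing Implicit Defensive.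
Import Order.TTheory GRing.Theory Num.Theory.
Import numFieldNormedType.Exports.
Local Open Scope ring_scope.
Local Open Scope classical_set_scope.

Definition trig_poly (R : realType) (t : R -> R) : Prop :=
  exists (n : nat) (a b : nat -> R),
    forall x : R, t x = \sum_(k < n.+1) (a k * cos (k%:R * x) + b k * sin (k%:R * x)).

(* g(λ) = h(λ) |λ-λ_1|^{α(1)} ... |λ-λ_r|^{α(r)}  (with 0^0 = 1, MathComp powR). *)
Definition fisher_hartwig (R : realType) (h : R -> R) (r : nat)
  (lam alpha : 'I_r -> R) (x : R) : R :=
  h x * \prod_(j < r) (`|x - lam j| `^ alpha j).

From HB Require Import structures.
From mathcomp Require Import all_boot all_order all_algebra.
From mathcomp Require Import all_classical all_reals all_analysis.
From mathcomp Require Import ring lra.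
Set Implicit Arguments. Unset Strict Implicit. Unset Printing Implicit Defensive.
Import Order.TTheory GRing.Theory Num.Theory.
Import numFieldNormedType.Exports.
Local Open Scope ring_scope.
Local Open Scope classical_set_scope.

(* With hav u = (1 - cos u) / 2 = sin (u / 2) ^ 2, which lies below both 1 and
   |u|, the product q x = prod_j hav (x - lam_j) ^ m_j with m_j = ceil (alpha_j)
   stays below prod_j |x - lam_j| ^ alpha_j.  If g 0 <= eps the zero polynomial
   works; otherwise alpha_j = 0 whenever lam_j = 0, so q 0 > 0, and we pick A
   with A q 0 = g 0 - eps.  By continuity at 0, A q <= g near 0; away from 0 the
   peak ((1 + cos x) / 2) ^ N falls below c / A for large N, c the lower bound
   of h, so A ((1 + cos x) / 2) ^ N q x <= c q x <= g x there.  Being a product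
   of trigonometric polynomials of degree one, this minorant is a trigonometric
   polynomial. *)

Section TrigPoly.
Variable R : realType.
Implicit Types (f g p : R -> R) (a b c d : R).

Lemma trig_poly_ext {f g} : trig_poly f -> f =1 g -> trig_poly g.
Proof. by move=> [n [a [b fE]]] fg; exists n, a, b => x; rewrite -fg. Qed.

Lemma trig_poly_harmonic a b (k : nat) :
  trig_poly (fun x => a * cos (k%:R * x) + b * sin (k%:R * x)).
Proof.
exists k, (fun i => if i == k then a else 0), (fun i => if i == k then b else 0).
move=> x; rewrite big_ord_recr /= eqxx big1 ?add0r // => i _.
by rewrite (ltn_eqF (ltn_ord i)) !mul0r addr0.
Qed.

Lemma trig_poly_cst c : trig_poly (fun=> c).
Proof.
apply: trig_poly_ext (trig_poly_harmonic c 0 0) _ => x.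
by rewrite mul0r cos0 mulr1 mul0r addr0.
Qed.

Lemma trig_polyZ c {f} : trig_poly f -> trig_poly (fun x => c * f x).
Proof.
move=> [n [a [b fE]]]; exists n, (fun k => c * a k), (fun k => c * b k) => x.
by rewrite fE mulr_sumr; apply: eq_bigr => i _; ring.
Qed.

Lemma trig_polyD {f g} : trig_poly f -> trig_poly g -> trig_poly (fun x => f x + g x).
Proof.
move=> [n1 [a1 [b1 fE]]] [n2 [a2 [b2 gE]]].
pose cut n (u : nat -> R) k := if (k < n.+1)%N then u k else 0.
exists (n1 + n2)%N, (fun k => cut n1 a1 k + cut n2 a2 k),
  (fun k => cut n1 b1 k + cut n2 b2 k) => x.
rewrite fE gE.
rewrite (big_ord_widen (n1 + n2).+1 (fun k => a1 k * cos (k%:R * x) + b1 k * sin (k%:R * x)));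
  last by rewrite ltnS leq_addr.
rewrite (big_ord_widen (n1 + n2).+1 (fun k => a2 k * cos (k%:R * x) + b2 k * sin (k%:R * x)));
  last by rewrite ltnS leq_addl.
rewrite !(big_mkcond (fun i : 'I_ _ => (i < _)%N)) -big_split /=.
apply: eq_bigr => i _; rewrite /cut.
by case: ifP => _; case: ifP => _; rewrite ?mul0r ?add0r ?addr0 ?mulrDl //; ring.
Qed.

Lemma trig_poly_sum n (F : nat -> R -> R) :
  (forall k, trig_poly (F k)) -> trig_poly (fun x => \sum_(k < n) F k x).
Proof.
move=> FP; elim: n => [|n IHn].
  by apply: trig_poly_ext (trig_poly_cst 0) _ => x; rewrite big_ord0.
by apply: trig_poly_ext (trig_polyD IHn (FP n)) _ => x; rewrite big_ord_recr.
Qed.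

Lemma trig_poly_mul_harmonic a b c d (k : nat) :
  trig_poly (fun x => (a * cos x + b * sin x) * (c * cos (k%:R * x) + d * sin (k%:R * x))).
Proof.
case: k => [|k].
  apply: trig_poly_ext (trig_poly_harmonic (a * c) (b * c) 1) _ => x.
  by rewrite mul0r cos0 sin0 mul1r; ring.
apply: trig_poly_ext (trig_polyD
  (trig_poly_harmonic ((a * c - b * d) / 2) ((a * d + b * c) / 2) k.+2)
  (trig_poly_harmonic ((a * c + b * d) / 2) ((a * d - b * c) / 2) k)) _ => x.
have -> : k.+2%:R * x = k.+1%:R * x + x by rewrite !mulrS; ring.
have -> : k%:R * x = k.+1%:R * x - x by rewrite !mulrS; ring.
by rewrite cosD sinD cosB sinB; field.
Qed.

Definition trig_poly_deg1 p := exists c a b, forall x, p x = c + a * cos x + b * sin x.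

Lemma trig_poly_mul_deg1 {p f} : trig_poly_deg1 p -> trig_poly f ->
  trig_poly (fun x => p x * f x).
Proof.
move=> [c [a [b pE]]] fP; have [n [u [v fE]]] := fP.
apply: trig_poly_ext (trig_polyD (trig_polyZ c fP) (trig_poly_sum n.+1
  (fun k => trig_poly_mul_harmonic a b (u k) (v k) k))) _ => x.
by rewrite pE -addrA mulrDl fE !mulr_sumr.
Qed.

Lemma trig_poly_mul_deg1X {p f} (n : nat) : trig_poly_deg1 p -> trig_poly f ->
  trig_poly (fun x => p x ^+ n * f x).
Proof.
move=> pP fP; elim: n => [|n IHn]; first by apply: trig_poly_ext fP _ => x; rewrite mul1r.
by apply: trig_poly_ext (trig_poly_mul_deg1 pP IHn) _ => x; rewrite exprS mulrA.
Qed.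

Lemma trig_poly_prod_deg1X (I : Type) (s : seq I) (p : I -> R -> R) (m : I -> nat) :
  (forall i, trig_poly_deg1 (p i)) -> trig_poly (fun x => \prod_(i <- s) p i x ^+ m i).
Proof.
move=> pP; elim: s => [|i s IHs].
  by apply: trig_poly_ext (trig_poly_cst 1) _ => x; rewrite big_nil.
by apply: trig_poly_ext (trig_poly_mul_deg1X (m i) (pP i) IHs) _ => x; rewrite big_cons.
Qed.

End TrigPoly.

Section Haversine.
Variable R : realType.
Implicit Types (x y u d e a : R).

Definition hav x := (1 - cos x) / 2.
Definition havcos x := (1 + cos x) / 2.

Lemma trig_poly_deg1_hav (l : R) : trig_poly_deg1 (fun x => hav (x - l)).
Proof. by exists (2^-1), (- cos l / 2), (- sin l / 2) => x; rewrite /hav cosB; ring. Qed.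

Lemma trig_poly_deg1_havcos : trig_poly_deg1 havcos.
Proof. by exists (2^-1), (2^-1), 0 => x; rewrite /havcos; ring. Qed.

Lemma hav_ge0 x : 0 <= hav x.
Proof. by rewrite divr_ge0 // subr_ge0 cos_le1. Qed.

Lemma havcos_ge0 x : 0 <= havcos x.
Proof. by rewrite divr_ge0 // -lerBlDl sub0r cos_geN1. Qed.

Lemma havcos_le1 x : havcos x <= 1.
Proof. by rewrite ler_pdivrMr // mul1r lerD2l cos_le1. Qed.

Lemma havcos0 : havcos 0 = 1 :> R.
Proof. by rewrite /havcos cos0 divff ?pnatr_eq0. Qed.

Lemma havE x : hav x = sin (x / 2) ^+ 2.
Proof.
rewrite /hav -[x in cos x](divfK (_ : 2 != 0)) ?pnatr_eq0 // mulr_natr.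
by rewrite cos_mulr2n cos2sin2; field.
Qed.

Lemma norm_sin_le x : `|sin x| <= `|x|.
Proof.
suff sin_le y : 0 < y -> `|sin y| <= y.
  have [x0|x0|->] := ltgtP x 0; last by rewrite sin0.
  - by rewrite -[sin x]opprK -sinN normrN (ltr0_norm x0) sin_le // oppr_gt0.
  - by rewrite (gtr0_norm x0) sin_le.
move=> y0; have [c _] := MVT y0 (fun x _ => is_derive_sin x)
  (continuous_subspaceT (@continuous_sin R)).
rewrite sin0 !subr0 => ->.
by rewrite normrM (gtr0_norm y0); apply: ler_piMl (ltW y0) (cos_max c).
Qed.

Lemma hav_le_norm x : hav x <= `|x|.
Proof.
have sin_le1 := sin_max (x / 2).
rewrite havE -real_normK ?num_real // expr2.
apply: le_trans (ler_piMl (normr_ge0 _) sin_le1) _.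
apply: le_trans (norm_sin_le _) _.
rewrite normrM; apply: ler_piMr (normr_ge0 x) _.
by rewrite normfV normr_nat invf_le1 ?ler1n.
Qed.

Lemma cos_lt1 x : 0 < `|x| <= pi -> cos x < 1.
Proof.
move=> /andP[x0 xpi]; rewrite -cos_norm -cos0.
by rewrite ltr_cos // in_itv /= ?lexx ?pi_ge0 ?normr_ge0.
Qed.

Lemma hav_gt0 x : 0 < `|x| <= pi -> 0 < hav x.
Proof. by move=> /cos_lt1 x1; rewrite divr_gt0 // subr_gt0. Qed.

Lemma havcos_lt1 x : 0 < `|x| <= pi -> havcos x < 1.
Proof. by move=> /cos_lt1 x1; rewrite ltr_pdivrMr // mul1r ltrD2l. Qed.

Lemma havcos_le d x : 0 <= d <= `|x| -> `|x| <= pi -> havcos x <= havcos d.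
Proof.
move=> /andP[d0 dx] xpi; rewrite ler_pM2r // lerD2l -cos_norm.
move: dx; rewrite le_eqVlt => /predU1P[->//|dx].
by rewrite ltW // ltr_cos // in_itv /= ?d0 ?xpi ?normr_ge0 // (le_trans (ltW dx)).
Qed.

Lemma havcos_expn_small d e : 0 < d -> 0 < e ->
  exists N, forall x, d <= `|x| <= pi -> havcos x ^+ N <= e.
Proof.
move=> d0 e0; pose d' := Order.min d pi.
have d'_gt0 : 0 < d' by rewrite lt_min d0 pi_gt0.
have d'_le_pi : `|d'| <= pi by rewrite gtr0_norm // ge_min lexx orbT.
have kappa_lt1 : `|havcos d'| < 1.
  by rewrite ger0_norm ?havcos_ge0 // havcos_lt1 // normr_gt0 gt_eqF.
have [N _ HN] := cvgr_lt 0 (cvg_expr kappa_lt1) _ e0.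
exists N => x /andP[dx xpi]; apply: le_trans (ltW (HN N (leqnn N))).
rewrite lerXn2r ?nnegrE ?havcos_ge0 // havcos_le // ltW //=.
by rewrite (le_trans _ dx) // ge_min lexx.
Qed.

Lemma expn_le_powR y a (n : nat) : 0 <= y <= 1 -> 0 <= a <= n%:R -> y ^+ n <= y `^ a.
Proof.
move=> /andP[y0 y1] /andP[a0 an]; rewrite -powR_mulrn //.
have [->|y_neq0] := eqVneq y 0.
  case: n an => [|n] an; last by rewrite powR0 ?pnatr_eq0 // powR_ge0.
  by have -> : a = 0 by apply/le_anti; rewrite an a0.
have y_pos : 0 < y <= 1 by rewrite lt_neqAle eq_sym y_neq0 y0 y1.
exact: ger_powR y_pos _ _ an.
Qed.

Lemma hav_expn_le_powR u a (n : nat) : 0 <= a <= n%:R -> hav u ^+ n <= `|u| `^ a.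
Proof.
move=> an; have a0 : 0 <= a by case/andP: an.
apply: le_trans (expn_le_powR _ an) _.
  by rewrite hav_ge0 /= /hav; have := cos_geN1 u; lra.
by rewrite ge0_ler_powR ?nnegrE ?hav_ge0 ?hav_le_norm.
Qed.

End Haversine.

Section Continuity.
Variable R : realType.

Lemma continuous_powR (p a : R) : 0 < a -> {for a, continuous (fun x => x `^ p)}.
Proof.
move=> a0; apply/differentiable_continuous/derivable1_diffP.
by apply: derivable_powR; rewrite in_itv /= a0.
Qed.

Lemma continuous_hav : continuous (@hav R).
Proof.
move=> x; apply: cvgM; last exact: cvg_cst.
by apply: cvgB; [exact: cvg_cst | exact: continuous_cos].
Qed.

Lemma continuous_gt0_near (F : R -> R) (x0 : R) : {for x0, continuous F} -> 0 < F x0 ->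
  exists2 d : R, 0 < d & forall x, `|x - x0| < d -> 0 < F x.
Proof.
move=> Fc F0; have : \forall x \near x0, 0 < F x by exact: cvgr_gt Fc _ F0.
move=> /nbhs_normP[d /= d0 Fd].
by exists d => // x xd; apply: Fd; rewrite /= distrC.
Qed.

End Continuity.

Lemma itv_piP (R : realType) (x : R) : x \in `[- pi, pi] <-> `|x| <= pi.
Proof. by rewrite in_setE /= in_itv /= ler_norml. Qed.

Lemma havcos_peak_minorant (R : realType) (G q : R -> R) (A c d : R) :
  0 < A -> 0 < c -> 0 < d -> (forall x, 0 <= q x) ->
  (forall x, `|x| < d -> A * q x <= G x) ->
  (forall x, `|x| <= pi -> c * q x <= G x) ->
  exists N, forall x, `|x| <= pi -> A * (havcos x ^+ N * q x) <= G x.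
Proof.
move=> A0 c0 d0 q_ge0 G_near G_far.
have [N havcosN] := havcos_expn_small d0 (divr_gt0 c0 A0).
exists N => x xpi; have [xd|dx] := ltP `|x| d.
  apply: le_trans (G_near x xd); apply: (ler_wpM2l (ltW A0)).
  by apply: ler_piMl; rewrite ?q_ge0 ?exprn_ile1 ?havcos_ge0 ?havcos_le1.
apply: le_trans (G_far x xpi); rewrite mulrA; apply: (ler_wpM2r (q_ge0 x)).
by rewrite mulrC -ler_pdivlMr // havcosN // dx.
Qed.

Section FisherHartwig.
Variables (R : realType) (r : nat) (lam alpha : 'I_r -> R).
Hypothesis alpha_ge0 : forall j, 0 <= alpha j.

Definition fh_factor (x : R) := \prod_(j < r) `|x - lam j| `^ alpha j.

Definition fh_order j := `|Num.ceil (alpha j)|%N.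

Definition fh_minorant (x : R) := \prod_(j < r) hav (x - lam j) ^+ fh_order j.

Lemma alpha_le_fh_order j : alpha j <= (fh_order j)%:R.
Proof.
rewrite /fh_order natr_absz ger0_norm ?real_ceil_ge ?num_real //.
by rewrite real_ceil_ge0 ?num_real // (lt_le_trans _ (alpha_ge0 j)).
Qed.

Lemma fh_factor_ge0 x : 0 <= fh_factor x.
Proof. by apply: prodr_ge0 => j _; exact: powR_ge0. Qed.

Lemma fh_minorant_ge0 x : 0 <= fh_minorant x.
Proof. by apply: prodr_ge0 => j _; rewrite exprn_ge0 ?hav_ge0. Qed.

Lemma fh_minorant_le x : fh_minorant x <= fh_factor x.
Proof.
apply: ler_prod => j _; rewrite exprn_ge0 ?hav_ge0 //=.
by rewrite hav_expn_le_powR // alpha_ge0 alpha_le_fh_order.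
Qed.

Lemma continuous_fh_minorant : continuous fh_minorant.
Proof.
apply: (continuous_big (@mul_continuous R)) => j _ x.
have shift_cont : {for x, continuous (fun y => y - lam j)}.
  by apply: cvgB; [exact: cvg_id | exact: cvg_cst].
have hav_cont := continuous_comp shift_cont (@continuous_hav R _).
exact (continuous_comp hav_cont (@exprn_continuous R _ _)).
Qed.

Lemma alpha_eq0_of_fh_factor0 : fh_factor 0 != 0 -> forall j, lam j = 0 -> alpha j = 0.
Proof.
move=> P0 j lam0; apply/eqP; apply: contraNT P0 => alpha_neq0.
by rewrite /fh_factor (bigD1 j) //= lam0 subrr normr0 powR0 // mul0r.
Qed.

Hypothesis alpha_at0 : forall j, lam j = 0 -> alpha j = 0.

Lemma continuous0_fh_factor : {for 0, continuous fh_factor}.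
Proof.
apply: (cvg_big (@mul_continuous R)) => // j _.
have [lam0|lam_neq0] := eqVneq (lam j) 0.
  rewrite alpha_at0 // powRr0; under eq_fun do rewrite powRr0; exact: cvg_cst.
have dist_cont : {for 0, continuous (fun x : R => `|x - lam j|)}.
  by apply: cvg_norm; apply: cvgB; [exact: cvg_id | exact: cvg_cst].
have dist0_gt0 : 0 < `|0 - lam j| by rewrite sub0r normrN normr_gt0.
exact (continuous_comp dist_cont (continuous_powR (p := alpha j) dist0_gt0)).
Qed.

Lemma fh_minorant_le_near0 (h : R -> R) (A : R) : {for 0, continuous h} ->
  A * fh_minorant 0 < h 0 * fh_factor 0 ->
  exists2 d : R, 0 < d & forall x, `|x| < d -> A * fh_minorant x <= h x * fh_factor x.
Proof.
move=> h_cont lt0.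
have F_cont : {for 0, continuous (fun x => h x * fh_factor x - A * fh_minorant x)}.
  apply: cvgB; apply: cvgM; [exact: h_cont | exact: continuous0_fh_factor |
    exact: cvg_cst | exact: continuous_fh_minorant].
have [|d d0 Fd] := continuous_gt0_near F_cont; first by rewrite subr_gt0.
by exists d => // x xd; rewrite -subr_ge0 ltW // Fd // subr0.
Qed.

Hypothesis lam_pi : forall j, `|lam j| <= pi.

Lemma fh_minorant0_gt0 : 0 < fh_minorant 0.
Proof.
apply: prodr_gt0 => j _; rewrite /fh_order.
have [lam0|lam_neq0] := eqVneq (lam j) 0; first by rewrite alpha_at0 // ceil0.
by rewrite exprn_gt0 // hav_gt0 // sub0r normrN normr_gt0 lam_neq0 lam_pi.
Qed.

Lemma fh_peak_minorant (h : R -> R) (A c : R) : {for 0, continuous h} ->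
  0 < c -> (forall x, `|x| <= pi -> c <= h x) ->
  0 < A -> A * fh_minorant 0 < h 0 * fh_factor 0 ->
  exists N, forall x, `|x| <= pi -> A * (havcos x ^+ N * fh_minorant x) <= h x * fh_factor x.
Proof.
move=> h_cont c_gt0 h_ge_c A_gt0 lt0.
have [d d_gt0 G_near] := fh_minorant_le_near0 h_cont lt0.
apply: (havcos_peak_minorant A_gt0 c_gt0 d_gt0 fh_minorant_ge0 G_near) => x xpi.
exact: ler_pM (ltW c_gt0) (fh_minorant_ge0 x) (h_ge_c x xpi) (fh_minorant_le x).
Qed.

Lemma trig_poly_fh_minorant (A : R) (N : nat) :
  trig_poly (fun x => A * (havcos x ^+ N * fh_minorant x)).
Proof.
apply: trig_polyZ; apply: trig_poly_mul_deg1X (trig_poly_deg1_havcos R) _.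
exact: trig_poly_prod_deg1X (fun j => trig_poly_deg1_hav (lam j)).
Qed.

End FisherHartwig.

Theorem lemma5p5 (R : realType) (h : R -> R) (r : nat) (lam alpha : 'I_r -> R)
  (Hlam : forall j, lam j \in `[- pi, pi])
  (Halpha : forall j, 0 <= alpha j)
  (Hh_nonneg : forall x, x \in `[- pi, pi] -> 0 <= h x)
  (Hh_meas : measurable_fun `[- pi, pi] h)
  (Hh_int : (@lebesgue_measure R).-integrable `[- pi, pi] (EFin \o h))
  (Hh_cont : {for 0, continuous h})
  (Hh_lb : exists2 c : R, 0 < c & forall x, x \in `[- pi, pi] -> c <= h x) :
  forall eps : R, 0 < eps ->
    exists t : R -> R, trig_poly t /\
      (forall x, x \in `[- pi, pi] ->
         0 <= t x <= fisher_hartwig h lam alpha x) /\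
      fisher_hartwig h lam alpha 0 - eps <= t 0.
Proof.
move=> eps eps0; set g0 := fisher_hartwig h lam alpha 0.
have [g0_le_eps|eps_lt_g0] := leP g0 eps.
  exists (fun=> 0); split; first exact: trig_poly_cst.
  split=> [x xpi|]; last by rewrite subr_le0.
  by rewrite lexx mulr_ge0 ?Hh_nonneg ?fh_factor_ge0.
have alpha_at0 : forall j, lam j = 0 -> alpha j = 0.
  apply: alpha_eq0_of_fh_factor0; apply: contraTneq eps_lt_g0 => P0.
  by rewrite /g0 /fisher_hartwig -/(fh_factor lam alpha 0) P0 mulr0 -leNgt ltW.
pose q := fh_minorant lam alpha.
have q0_gt0 : 0 < q 0 by apply: fh_minorant0_gt0 => // j; apply/itv_piP.
pose A := (g0 - eps) / q 0.
have A_gt0 : 0 < A by rewrite divr_gt0 // subr_gt0.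
have Aq0 : A * q 0 = g0 - eps by rewrite mulfVK ?gt_eqF.
have [c c_gt0 h_ge_c] := Hh_lb.
have Aq0_lt : A * q 0 < g0 by rewrite Aq0 gtrBl.
have [N tN] := fh_peak_minorant Halpha alpha_at0 Hh_cont c_gt0
  (fun x xpi => h_ge_c x (proj2 (itv_piP x) xpi)) A_gt0 Aq0_lt.
exists (fun x => A * (havcos x ^+ N * q x)); split; first exact: trig_poly_fh_minorant.
split=> [x /itv_piP xpi|]; last by rewrite havcos0 expr1n mul1r Aq0.
rewrite tN // andbT.
exact: mulr_ge0 (ltW A_gt0) (mulr_ge0 (exprn_ge0 _ (havcos_ge0 x)) (fh_minorant_ge0 _ _ x)).
Qed.
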